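(* Let $\Delta_0=\{x_0,\dots,x_d\}\subset\mathbb{R}^d$ be the vertex set of a regular simplex of edge length $1$ with centroid at the origin ($\sum_i x_i=0$), and let $\Delta'$ be the vertex set of another regular simplex of edge length $1$. If $\mathrm{dist}_H(\Delta_0,\Delta')<\tfrac12$, then there exist $\tau\in\mathbb{R}^d$ and $R\in O(d)$ such that the map $x\mapsto Rx+\tau$ maps $\Delta_0$ onto $\Delta'$ and \[ \mathrm{dist}_H(\Delta_0,\Delta')\;\ge\;\frac{1}{2\sqrt{d+1}}\bigl(\|R-I_d\|_2+\|\tau\|_2\bigr), \] where $\|\cdot\|_2$ on matrices is the operator (spectral) norm.
   Context: A regular simplex of edge length $1$ in $\mathbb{R}^d$ is given by its vertex set: $d+1$ points at pairwise distance exactly $1$. For nonempty compact $A,B\subset\mathbb{R}^d$, $\mathrm{dist}_H(A,B)=\max\{\sup_{a\in A}\inf_{b\in B}\|a-b\|_2,\ \sup_{b\in B}\inf_{a\in A}\|a-b\|_2\}$. *)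

From HB Require Import structures.
From mathcomp Require Import all_boot all_order all_algebra.
From mathcomp Require Import all_classical all_reals.
Set Implicit Arguments. Unset Strict Implicit. Unset Printing Implicit Defensive.
Import Order.TTheory GRing.Theory Num.Theory.
Local Open Scope ring_scope.
Local Open Scope classical_set_scope.

Definition enorm (R : realType) (d : nat) (v : 'cV[R]_d) : R :=
  Num.sqrt (\sum_(i < d) v i 0 ^+ 2).

Definition opnorm (R : realType) (d : nat) (M : 'M[R]_d) : R :=
  sup [set enorm (M *m v) | v in [set v : 'cV[R]_d | enorm v <= 1]].

Definition hausdorff (R : realType) (d : nat) (A B : set 'cV[R]_d) : R :=
  Num.max
    (sup [set inf [set enorm (a - b) | b in B] | a in A])
    (sup [set inf [set enorm (a - b) | a in A] | b in B]).

Definition regular_unit_simplex (R : realType) (d : nat) (x : 'I_d.+1 -> 'cV[R]_d) : Prop :=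
  forall i j : 'I_d.+1, i != j -> enorm (x i - x j) = 1.

Definition orthogonal_mx (R : realType) (d : nat) (M : 'M[R]_d) : Prop :=
  M^T *m M = 1%:M.

From HB Require Import structures.
From mathcomp Require Import all_boot all_order all_algebra.
From mathcomp Require Import all_classical all_reals.
From mathcomp Require Import ring lra.
Set Implicit Arguments. Unset Strict Implicit. Unset Printing Implicit Defensive.
Import Order.TTheory GRing.Theory Num.Theory.
Local Open Scope ring_scope.
Local Open Scope classical_set_scope.

(* Since dist_H < 1/2 and the vertices of Delta_0 are 1 apart, sending each vertex
   x_i to a vertex y_(s i) at distance <= h := dist_H is a bijection s.  Let tau be
   the centroid of Delta' and z_i := y_(s i) - tau.  Both centered simplices have
   the Gram matrix I/2 - J/(2(d+1)), so Q := 2 sum_i z_i x_i^T maps x_i to z_i and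
   is orthogonal, and 2 sum_i x_i x_i^T = I.  As sum_i x_i = 0, tau is the mean of
   the displacements y_(s i) - x_i, hence |tau| <= h, and
   (Q - I) v = 2 sum_i <x_i, v> (y_(s i) - x_i) has norm at most
   2 h sum_i |<x_i, v>| <= sqrt(2(d+1)) h |v| by Cauchy-Schwarz.
   Finally sqrt(2(d+1)) + 1 <= 2 sqrt(d+1) once d >= 2, while for d = 1 the
   bound on Q - I forces Q = I. *)

Section Euclid.
Variable R : realType.
Implicit Types (n k : nat).

Definition dot n (u v : 'cV[R]_n) : R := \sum_(i < n) u i 0 * v i 0.

Lemma dotC n (u v : 'cV[R]_n) : dot u v = dot v u.
Proof. by apply: eq_bigr => i _; rewrite mulrC. Qed.

Lemma dotDr n (u v w : 'cV[R]_n) : dot u (v + w) = dot u v + dot u w.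
Proof. by rewrite /dot -big_split; apply: eq_bigr => i _; rewrite mxE mulrDr. Qed.

Lemma dotDl n (u v w : 'cV[R]_n) : dot (v + w) u = dot v u + dot w u.
Proof. by rewrite dotC dotDr !(dotC u). Qed.

Lemma dotZr n a (u v : 'cV[R]_n) : dot u (a *: v) = a * dot u v.
Proof. by rewrite /dot mulr_sumr; apply: eq_bigr => i _; rewrite mxE mulrCA. Qed.

Lemma dotZl n a (u v : 'cV[R]_n) : dot (a *: v) u = a * dot v u.
Proof. by rewrite dotC dotZr dotC. Qed.

Lemma dotBr n (u v w : 'cV[R]_n) : dot u (v - w) = dot u v - dot u w.
Proof. by rewrite dotDr -scaleN1r dotZr mulN1r. Qed.

Lemma dotBl n (u v w : 'cV[R]_n) : dot (v - w) u = dot v u - dot w u.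
Proof. by rewrite dotC dotBr !(dotC u). Qed.

Lemma dot0l n (u : 'cV[R]_n) : dot 0 u = 0.
Proof. by rewrite /dot big1 // => i _; rewrite mxE mul0r. Qed.

Lemma dot_suml n I (r : seq I) (P : pred I) (u : 'cV[R]_n) (F : I -> 'cV[R]_n) :
  dot (\sum_(i <- r | P i) F i) u = \sum_(i <- r | P i) dot (F i) u.
Proof. by elim/big_rec2: _ => [|i a b _ <-]; rewrite ?dot0l ?dotDl. Qed.

Lemma dot_sumr n I (r : seq I) (P : pred I) (u : 'cV[R]_n) (F : I -> 'cV[R]_n) :
  dot u (\sum_(i <- r | P i) F i) = \sum_(i <- r | P i) dot u (F i).
Proof. by rewrite dotC dot_suml; apply: eq_bigr => i _; rewrite dotC. Qed.

Lemma dot_ge0 n (u : 'cV[R]_n) : 0 <= dot u u.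
Proof. by apply: sumr_ge0 => i _; rewrite -expr2 sqr_ge0. Qed.

Lemma dot_eq0 n (u : 'cV[R]_n) : dot u u = 0 -> u = 0.
Proof.
move=> /eqP; rewrite psumr_eq0 => [/allP u0|i _]; last by rewrite -expr2 sqr_ge0.
apply/matrixP => i j; rewrite (ord1 j) mxE.
by have /= := u0 i (mem_index_enum i); rewrite -expr2 sqrf_eq0 => /eqP.
Qed.

Lemma enormE n (u : 'cV[R]_n) : enorm u = Num.sqrt (dot u u).
Proof. by congr Num.sqrt; apply: eq_bigr => i _; rewrite expr2. Qed.

Lemma enorm_ge0 n (u : 'cV[R]_n) : 0 <= enorm u.
Proof. exact: sqrtr_ge0. Qed.

Lemma enorm_sq n (u : 'cV[R]_n) : enorm u ^+ 2 = dot u u.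
Proof. by rewrite enormE sqr_sqrtr // dot_ge0. Qed.

Lemma enormZ n a (u : 'cV[R]_n) : enorm (a *: u) = `|a| * enorm u.
Proof. by rewrite !enormE dotZl dotZr mulrA -expr2 sqrtrM ?sqr_ge0 // sqrtr_sqr. Qed.

Lemma enormN n (u : 'cV[R]_n) : enorm (- u) = enorm u.
Proof. by rewrite -scaleN1r enormZ normrN1 mul1r. Qed.

Lemma enorm_distC n (u v : 'cV[R]_n) : enorm (u - v) = enorm (v - u).
Proof. by rewrite -opprB enormN. Qed.

Lemma enorm0 n : enorm (0 : 'cV[R]_n) = 0.
Proof. by rewrite enormE dot0l sqrtr0. Qed.

Lemma cauchy_schwarz n (u v : 'cV[R]_n) : dot u v ^+ 2 <= dot u u * dot v v.
Proof.
have [/dot_eq0 ->|v0] := eqVneq (dot v v) 0; first by rewrite dotC !dot0l mulr0 expr0n.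
have vv_gt0 : 0 < dot v v by rewrite lt_neqAle eq_sym v0 dot_ge0.
(* expand 0 <= |u - t v|^2 at the minimiser t = <u,v>/<v,v> *)
have := dot_ge0 (u - (dot u v / dot v v) *: v).
rewrite !dotBl !dotBr !dotZl !dotZr (dotC v u).
have -> : dot u u - dot u v / dot v v * dot u v
          - (dot u v / dot v v * dot u v - dot u v / dot v v * (dot u v / dot v v * dot v v))
        = (dot u u * dot v v - dot u v ^+ 2) / dot v v by field.
by rewrite pmulr_lge0 ?invr_gt0 // subr_ge0.
Qed.

Lemma dot_le_enorm n (u v : 'cV[R]_n) : dot u v <= enorm u * enorm v.
Proof.
rewrite !enormE -sqrtrM ?dot_ge0 //; apply: le_trans (ler_norm _) _.
by rewrite -sqrtr_sqr ler_wsqrtr // cauchy_schwarz.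
Qed.

Lemma enormD n (u v : 'cV[R]_n) : enorm (u + v) <= enorm u + enorm v.
Proof.
rewrite -(ler_pXn2r (n:=2)) ?nnegrE ?addr_ge0 ?enorm_ge0 //.
rewrite enorm_sq dotDl !dotDr (dotC v u) sqrrD !enorm_sq.
by have := dot_le_enorm u v; lra.
Qed.

Lemma enorm_sum n I (r : seq I) (P : pred I) (F : I -> 'cV[R]_n) :
  enorm (\sum_(i <- r | P i) F i) <= \sum_(i <- r | P i) enorm (F i).
Proof.
elim/big_rec2: _ => [|i a b _ le_ab]; first by rewrite enorm0.
by apply: le_trans (enormD _ _) _; rewrite lerD2l.
Qed.

Lemma sum_norm_sq_le k (c : 'I_k -> R) :
  (\sum_i `|c i|) ^+ 2 <= k%:R * \sum_i c i ^+ 2.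
Proof.
pose u : 'cV[R]_k := \col_i `|c i|.
pose w : 'cV[R]_k := const_mx 1.
have := cauchy_schwarz u w.
have -> : dot u w = \sum_i `|c i| by apply: eq_bigr => i _; rewrite !mxE mulr1.
have -> : dot u u = \sum_i c i ^+ 2.
  by apply: eq_bigr => i _; rewrite !mxE -expr2 real_normK ?num_real.
have -> : dot w w = k%:R.
  by rewrite /dot (eq_bigr (fun _ => 1)) ?sumr_const ?card_ord // => i _; rewrite !mxE mulr1.
by rewrite mulrC.
Qed.

Lemma enorm_mean_le k n (x y : 'I_k.+1 -> 'cV[R]_n) h :
  \sum_i x i = 0 -> (forall i, enorm (y i - x i) <= h) ->
  enorm (k.+1%:R^-1 *: \sum_i y i) <= h.
Proof.
move=> x_centered le_h.
have -> : \sum_i y i = \sum_i (y i - x i) by rewrite sumrB x_centered subr0.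
rewrite enormZ ger0_norm ?invr_ge0 // ler_pdivrMl ?ltr0n //.
apply: le_trans (enorm_sum _ _ _) _.
by apply: le_trans (ler_sum _ (fun i _ => le_h i)) _; rewrite sumr_const card_ord mulr_natl.
Qed.

Lemma sum_sub_mean n k (u : 'I_k.+1 -> 'cV[R]_n) :
  \sum_i (u i - k.+1%:R^-1 *: \sum_j u j) = 0.
Proof.
by rewrite sumrB sumr_const card_ord -scaler_nat scalerA mulfV ?pnatr_eq0 // scale1r subrr.
Qed.

End Euclid.

Section RegularSimplex.
Variable R : realType.

Lemma dot_regular_centered d (w : 'I_d.+1 -> 'cV[R]_d) :
  regular_unit_simplex w -> \sum_i w i = 0 ->
  forall i j, dot (w i) (w j) = (i == j)%:R / 2 - (2 * d.+1%:R)^-1.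
Proof.
move=> w_reg w_centered.
set N : R := d.+1%:R; have N_neq0 : N != 0 by rewrite pnatr_eq0.
pose a i := dot (w i) (w i); pose S := \sum_i a i.
have polar i j : dot (w i) (w j) = (a i + a j - 1) / 2 + (i == j)%:R / 2.
  have [<-|ij] := eqVneq i j; first by rewrite /a /=; field.
  have := congr1 (fun r => r ^+ 2) (w_reg i j ij).
  by rewrite enorm_sq !dotBl !dotBr (dotC (w j)) expr1n /= => ?; rewrite /a; lra.
(* [<w i, sum_j w j> = 0] pins down [|w i|^2] *)
have row_sum i : S / 2 + N * (a i - 1) / 2 + 1 / 2 = 0.
  have : dot (w i) (\sum_j w j) = 0 by rewrite w_centered dotC dot0l.
  rewrite dot_sumr; under eq_bigr do rewrite polar.
  rewrite big_split /=.
  have -> : \sum_j (i == j)%:R / 2 = 1 / 2 :> R.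
    rewrite (bigD1 i) //= eqxx big1 => [|j]; first by rewrite addr0.
    by rewrite eq_sym => /negbTE ->; rewrite mul0r.
  rewrite (eq_bigr (fun j => a j / 2 + (a i - 1) / 2)) => [|j _]; last by field.
  rewrite big_split /= -mulr_suml sumr_const card_ord -mulr_natl -/N -/S.
  by move=> ?; lra.
have a_const i : a i = (N - S - 1) / N.
  by apply: (mulfI N_neq0); rewrite mulrCA divff // mulr1; have := row_sum i; lra.
have S_val : S = (N - 1) / 2.
  have : S = N * ((N - S - 1) / N).
    by rewrite {1}/S (eq_bigr _ (fun i _ => a_const i)) sumr_const card_ord mulr_natl.
  by rewrite mulrCA divff // mulr1 => ?; lra.
by move=> i j; rewrite polar !a_const S_val; field; rewrite addrC natr1.
Qed.

Lemma sum_dot_regular_centered n d (w : 'I_d.+1 -> 'cV[R]_d) (u : 'I_d.+1 -> 'cV[R]_n) j :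
  regular_unit_simplex w -> \sum_i w i = 0 -> \sum_i u i = 0 ->
  2 *: \sum_i dot (w i) (w j) *: u i = u j.
Proof.
move=> w_reg w_centered u_centered.
under eq_bigr do rewrite dot_regular_centered // scalerBl.
rewrite sumrB -scaler_sumr u_centered scaler0 subr0.
rewrite (bigD1 j) //= eqxx big1 => [|i /negbTE ->]; last by rewrite mul0r scale0r.
by rewrite addr0 mul1r scalerA divff ?scale1r ?pnatr_eq0.
Qed.

Lemma mulmx_fixed_vertices_eq1 d (x : 'I_d.+1 -> 'cV[R]_d) (M : 'M[R]_d) :
  regular_unit_simplex x -> \sum_i x i = 0 -> (forall j, M *m x j = x j) -> M = 1%:M.
Proof.
move=> x_reg x_centered fixM.
pose X : 'M[R]_d := \matrix_(k, j) x (widen_ord (leqnSn d) j) k 0.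
pose J : 'M[R]_d := const_mx 1.
have N_neq0 : (1 + d%:R : R) != 0 by rewrite addrC natr1 pnatr_eq0.
have gramX : X^T *m X = 2^-1 *: 1%:M - (2 * d.+1%:R)^-1 *: J.
  apply/matrixP => i j; rewrite !mxE.
  transitivity (dot (x (widen_ord (leqnSn d) i)) (x (widen_ord (leqnSn d) j))).
    by apply: eq_bigr => k _; rewrite !mxE.
  by rewrite dot_regular_centered // -[widen_ord _ i == _]/(i == j); case: (i == j) => /=; field.
have JJ : J *m J = d%:R *: J.
  apply/matrixP => i j; rewrite !mxE (eq_bigr (fun _ => 1)) => [|k _]; last by rewrite !mxE mulr1.
  by rewrite sumr_const card_ord mulr1.
(* the Gram matrix I/2 - J/(2(d+1)) of d vertices has inverse 2(I + J) *)
have : X^T *m (X *m (2 *: (1%:M + J))) = 1%:M.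
  rewrite mulmxA gramX -scalemxAr mulmxDr !mulmxBl -!scalemxAl !mul1mx !mulmx1 JJ.
  by apply/matrixP => i j; rewrite !mxE; case: (i == j) => /=; field.
case/mulmx1_unit => /[!unitmx_tr] X_unit _.
have MX : M *m X = X.
  apply/matrixP => k j; rewrite !mxE -(fixM (widen_ord (leqnSn d) j)) mxE.
  by apply: eq_bigr => l _; rewrite mxE.
by rewrite -(mulmxK X_unit M) MX mulmxV.
Qed.

Definition simplex_map n k (x z : 'I_k -> 'cV[R]_n) : 'M[R]_n :=
  2 *: \sum_i z i *m (x i)^T.

Lemma simplex_mapE n k (x z : 'I_k -> 'cV[R]_n) v :
  simplex_map x z *m v = 2 *: \sum_i dot (x i) v *: z i.
Proof.
rewrite -scalemxAl mulmx_suml; congr (_ *: _); apply: eq_bigr => i _.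
apply/matrixP => a b; rewrite (ord1 b) -mulmxA !mxE big_ord1 !mxE mulrC.
by congr (_ * _); apply: eq_bigr => l _; rewrite !mxE.
Qed.

Lemma trmx_simplex_map n k (x z : 'I_k -> 'cV[R]_n) :
  (simplex_map x z)^T = simplex_map z x.
Proof.
rewrite /simplex_map linearZ linear_sum /=; congr (_ *: _).
by apply: eq_bigr => i _; rewrite trmx_mul trmxK.
Qed.

Section CenteredPair.
Variables (d : nat) (x z : 'I_d.+1 -> 'cV[R]_d).
Hypotheses (x_reg : regular_unit_simplex x) (x_centered : \sum_i x i = 0).
Hypotheses (z_reg : regular_unit_simplex z) (z_centered : \sum_i z i = 0).

Lemma simplex_map_vertex j : simplex_map x z *m x j = z j.
Proof. by rewrite simplex_mapE sum_dot_regular_centered. Qed.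

Lemma simplex_map_orthogonal : orthogonal_mx (simplex_map x z).
Proof.
apply: (mulmx_fixed_vertices_eq1 x_reg x_centered) => j.
by rewrite -mulmxA simplex_map_vertex trmx_simplex_map simplex_mapE sum_dot_regular_centered.
Qed.

Lemma simplex_map_id : simplex_map x x = 1%:M.
Proof.
apply: (mulmx_fixed_vertices_eq1 x_reg x_centered) => j.
by rewrite simplex_mapE sum_dot_regular_centered.
Qed.

Lemma simplex_map_sub1_le tau h v :
  (forall i, enorm (z i + tau - x i) <= h) -> enorm v <= 1 ->
  enorm ((simplex_map x z - 1%:M) *m v) <= Num.sqrt (2 * d.+1%:R) * h.
Proof.
move=> near v_le1.
pose c i := dot (x i) v.
have h_ge0 : 0 <= h := le_trans (enorm_ge0 _) (near ord0).
have sum_c : \sum_i c i = 0 by rewrite /c -dot_suml x_centered dot0l.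
(* as [sum_i c i = 0], shifting every [z i] by [tau] does not change the sum *)
have expand : (simplex_map x z - 1%:M) *m v = 2 *: \sum_i c i *: (z i + tau - x i).
  rewrite mulmxBl -simplex_map_id !simplex_mapE -scalerBr -sumrB; congr (_ *: _).
  under [RHS]eq_bigr do rewrite addrAC scalerDr.
  rewrite [RHS]big_split /= -scaler_suml sum_c scale0r addr0.
  by apply: eq_bigr => i _; rewrite scalerBr.
have sum_c2 : dot v v = 2 * \sum_i c i ^+ 2.
  rewrite -{2}[v]mul1mx -simplex_map_id simplex_mapE dotZr dot_sumr.
  by congr (_ * _); apply: eq_bigr => i _; rewrite dotZr (dotC v) expr2.
have sum_abs_c : (\sum_i `|c i|) ^+ 2 <= d.+1%:R / 2.
  apply: le_trans (sum_norm_sq_le c) _.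
  have : dot v v <= 1.
    by rewrite -enorm_sq -(expr1n _ 2) lerXn2r ?nnegrE ?enorm_ge0.
  have : (0 : R) <= d.+1%:R by [].
  by rewrite sum_c2; nra.
apply: (@le_trans _ _ (2 * (\sum_i `|c i|) * h)).
  rewrite expand enormZ ger0_norm // -mulrA ler_wpM2l // mulr_suml.
  apply: le_trans (enorm_sum _ _ _) _; apply: ler_sum => i _.
  by rewrite enormZ ler_wpM2l.
have sum_ge0 : 0 <= \sum_i `|c i| by rewrite sumr_ge0.
rewrite ler_wpM2r // -(ger0_norm (_ : 0 <= 2 * \sum_i `|c i|)) ?mulr_ge0 //.
by rewrite -sqrtr_sqr ler_wsqrtr // exprMn; nra.
Qed.

End CenteredPair.

End RegularSimplex.

Section Hausdorff.
Variable R : realType.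

Lemma hausdorff_nearest n (I J : finType) (x : I -> 'cV[R]_n) (y : J -> 'cV[R]_n) (j0 : J) i :
  exists j, enorm (x i - y j) <= hausdorff (range x) (range y).
Proof.
pose D a := [set enorm (a - b) | b in range y].
have D_lb a : has_lbound (D a) by exists 0 => _ [b _ <-]; exact: enorm_ge0.
have D_y a j : D a (enorm (a - y j)) by exists (y j) => //; exists j.
have [j _ j_min] := arg_minP (fun j => enorm (x i - y j)) (isT : xpredT j0).
exists j; apply: (@le_trans _ _ (inf (D (x i)))).
  apply: lb_le_inf; first by exists (enorm (x i - y j0)).
  by move=> _ [_ [k _ <-] <-]; exact: j_min.
rewrite /hausdorff le_max; apply/orP; left.
apply: ub_le_sup; last by exists (x i) => //; exists i.
exists (\sum_k enorm (x k - y j0)) => _ [_ [k _ <-] <-].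
apply: le_trans (ge_inf (D_lb _) (D_y _ j0)) _.
by rewrite (bigD1 k) //= lerDl sumr_ge0 // => l _; exact: enorm_ge0.
Qed.

(* Vertices of [x] are 1 apart, so two of them cannot share a partner within [h < 1/2]. *)
Lemma hausdorff_matching d (x y : 'I_d.+1 -> 'cV[R]_d) :
  regular_unit_simplex x -> hausdorff (range x) (range y) < 1 / 2 ->
  exists2 s : 'I_d.+1 -> 'I_d.+1, injective s &
    forall i, enorm (y (s i) - x i) <= hausdorff (range x) (range y).
Proof.
move=> x_reg h_lt.
have [s near] := choice (hausdorff_nearest x y ord0).
exists s => [i k s_ik|i]; last by rewrite enorm_distC.
apply/eqP; apply: contraT => ik.
have := enormD (x i - y (s i)) (y (s k) - x k).
rewrite s_ik addrA subrK x_reg // (enorm_distC (y _)).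
by have := near i; have := near k; rewrite s_ik; lra.
Qed.

End Hausdorff.

Section OperatorNorm.
Variable R : realType.

Lemma opnorm_le n (M : 'M[R]_n) c :
  (forall v, enorm v <= 1 -> enorm (M *m v) <= c) -> opnorm M <= c.
Proof.
move=> M_le; apply: ge_sup; first by exists (enorm (M *m 0)), 0; rewrite //= enorm0 ler01.
by move=> _ [v v_le1 <-]; exact: M_le.
Qed.

Lemma sqrt_double_add1_le (N : R) : 3 <= N -> Num.sqrt (2 * N) + 1 <= 2 * Num.sqrt N.
Proof.
move=> N_ge3; rewrite sqrtrM //.
have r_ge0 := sqrtr_ge0 (2 : R); have s_ge0 := sqrtr_ge0 N.
have r2 : Num.sqrt 2 ^+ 2 = 2 :> R by rewrite sqr_sqrtr.
have s2 : Num.sqrt N ^+ 2 = N by rewrite sqr_sqrtr //; lra.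
have r_le : Num.sqrt 2 <= 283 / 200 :> R by nra.
have s_ge : 173 / 100 <= Num.sqrt N by nra.
nra.
Qed.

(* [sqrt_double_add1_le] needs d >= 2; for d = 1 the hypothesis forces Q = 1 instead. *)
Lemma opnorm_orthogonal_sub1_le d (Q : 'M[R]_d) h :
  orthogonal_mx Q -> 0 <= h -> h < 1 / 2 ->
  (forall v, enorm v <= 1 -> enorm ((Q - 1%:M) *m v) <= Num.sqrt (2 * d.+1%:R) * h) ->
  opnorm (Q - 1%:M) <= (2 * Num.sqrt d.+1%:R - 1) * h.
Proof.
case: d Q => [|[|d]] Q Q_orth h_ge0 h_lt Q_le.
- by apply: opnorm_le => v _; rewrite [_ *m v]flatmx0 enorm0 sqrtr1; lra.
- have Q_eq1 : Q - 1%:M = 0.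
    have q2 : Q ord0 ord0 * Q ord0 ord0 = 1.
      by have := congr1 (fun M : 'M[R]_1 => M ord0 ord0) Q_orth; rewrite !mxE big_ord1 !mxE.
    have := Q_le (const_mx 1).
    rewrite /enorm !big_ord1 !mxE big_ord1 !mxE eqxx /= mulr1 expr1n sqrtr1 lexx.
    have -> : 2 * 2 = 2 ^+ 2 :> R by rewrite expr2.
    rewrite !sqrtr_sqr (ger0_norm (_ : 0 <= 2)) // => /(_ isT).
    rewrite ler_norml => /andP [q_gt _].
    have q_gt0 : 0 < Q ord0 ord0 by lra.
    have q1 : Q ord0 ord0 = 1 by nra.
    by apply/matrixP => i j; rewrite !ord1 !mxE q1 subrr.
  have sqrt2_ge1 : 1 <= Num.sqrt (2 : R) by rewrite -{1}sqrtr1 ler_wsqrtr // ler1n.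
  apply: opnorm_le => v _; rewrite Q_eq1 mul0mx enorm0; nra.
- apply: opnorm_le => v v_le1; apply: le_trans (Q_le v v_le1) _.
  by rewrite ler_wpM2r // lerBrDr sqrt_double_add1_le // (ler_nat R 3).
Qed.

End OperatorNorm.

Theorem mainTheorem10 (R : realType) (d : nat)
    (x y : 'I_d.+1 -> 'cV[R]_d) :
  regular_unit_simplex x ->
  \sum_(i < d.+1) x i = 0 ->
  regular_unit_simplex y ->
  hausdorff (range x) (range y) < 1 / 2 ->
  exists (tau : 'cV[R]_d) (Q : 'M[R]_d),
    orthogonal_mx Q /\
    (fun v => Q *m v + tau) @` (range x) = range y /\
    hausdorff (range x) (range y) >=
      1 / (2 * Num.sqrt (d.+1)%:R) * (opnorm (Q - 1%:M) + enorm tau).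
Proof.
move=> x_reg x_centered y_reg h_lt.
have [s s_inj near] := hausdorff_matching x_reg h_lt.
set h := hausdorff _ _ in h_lt near *.
set tau := d.+1%:R^-1 *: \sum_i y (s i).
pose z i := y (s i) - tau.
have z_reg : regular_unit_simplex z.
  by move=> i j ij; rewrite /z opprB addrA subrK y_reg // (inj_eq s_inj).
have z_centered : \sum_i z i = 0 := sum_sub_mean (fun i => y (s i)).
have near_z i : enorm (z i + tau - x i) <= h by rewrite subrK.
have h_ge0 : 0 <= h := le_trans (enorm_ge0 _) (near ord0).
have Q_orth := simplex_map_orthogonal x_reg x_centered z_reg z_centered.
exists tau, (simplex_map x z); split=> //; split.
  apply/seteqP; split=> [_ [_ [i _ <-] <-]|_ [j _ <-]].
    by exists (s i) => //; rewrite simplex_map_vertex // subrK.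
  have [t sK tK] := injF_bij s_inj.
  exists (x (t j)); first by exists (t j).
  by rewrite simplex_map_vertex // subrK tK.
have Q_le := opnorm_orthogonal_sub1_le Q_orth h_ge0 h_lt
  (fun v => simplex_map_sub1_le x_reg x_centered near_z (v := v)).
have tau_le : enorm tau <= h := enorm_mean_le x_centered near.
have s_gt0 : 0 < Num.sqrt d.+1%:R :> R by rewrite sqrtr_gt0 ltr0n.
by rewrite mul1r ler_pdivrMl ?mulr_gt0 //; lra.
Qed.
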